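(* Let $R$ be an associative ring with identity and $M$ a left $R$-module which is projective in $\sigma[M]$. If $M$ is FI-simple, then $M$ is cogenerated by each of its non-zero factor modules; that is, for every proper submodule $N$ of $M$ there is a monomorphism $M\to (M/N)^S$ for some index set $S$.
   Context: $\sigma[M]$ is the full subcategory of modules subgenerated by $M$. A module $M$ is FI-simple if its only fully invariant submodules are $0$ and $M$. *)

From HB Require Import structures.
From mathcomp Require Import all_boot all_order all_algebra.
From Stdlib Require Import List.
Set Implicit Arguments. Unset Strict Implicit. Unset Printing Implicit Defensive.
Import GRing.Theory.
Local Open Scope ring_scope.

Section ModuleDefs.
Variable R : pzRingType.

Definition is_submodule (M : lmodType R) (N : M -> Prop) : Prop :=
  [/\ N 0, (forall x y, N x -> N y -> N (x + y)) & (forall (r : R) x, N x -> N (r *: x))].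

Definition fully_invariant (M : lmodType R) (N : M -> Prop) : Prop :=
  is_submodule N /\ forall (f : {linear M -> M}) x, N x -> N (f x).

Definition FI_simple (M : lmodType R) : Prop :=
  forall N : M -> Prop, fully_invariant N ->
    (forall x, N x <-> x = 0) \/ (forall x, N x).

(* Elements of the direct sum M^(I): functions I -> M with finite support. *)
Definition fin_supp (I : Type) (M : lmodType R) (x : I -> M) : Prop :=
  exists s : list I, forall i, ~ In i s -> x i = 0.

(* L is M-generated: L is an epimorphic image of a direct sum M^(I). *)
Definition generated_by (M L : lmodType R) : Prop :=
  exists (I : Type) (g : (I -> M) -> L),
    [/\ (forall x y, fin_supp x -> fin_supp y ->
           g (fun i => x i + y i) = g x + g y),
        (forall (r : R) x, fin_supp x -> g (fun i => r *: x i) = r *: g x)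
      & (forall l : L, exists x, fin_supp x /\ g x = l)].

(* N belongs to sigma[M]: N is isomorphic to a submodule of an M-generated module. *)
Definition in_sigma (M N : lmodType R) : Prop :=
  exists L : lmodType R, generated_by M L /\
    exists f : {linear N -> L}, injective f.

Definition projective_in_sigma (M : lmodType R) : Prop :=
  forall (A B : lmodType R) (g : {linear A -> B}) (f : {linear M -> B}),
    in_sigma M A -> in_sigma M B -> (forall b, exists a, g a = b) ->
    exists h : {linear M -> A}, forall x, g (h x) = f x.

End ModuleDefs.

From HB Require Import structures.
From mathcomp Require Import all_boot all_order all_algebra.
Set Implicit Arguments. Unset Strict Implicit. Unset Printing Implicit Defensive.
Import GRing.Theory.
Local Open Scope ring_scope.

(* The reject of Q in M, the intersection of the kernels of all
   homomorphisms M -> Q, is fully invariant because it is stable under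
   precomposition by endomorphisms. It is proper as soon as some
   homomorphism M -> Q is non-zero, so FI-simplicity forces it to vanish,
   which says exactly that the family of all homomorphisms M -> Q separates
   points. *)

Section Reject.
Variables (R : pzRingType) (M Q : lmodType R).

Definition reject (x : M) : Prop := forall g : {linear M -> Q}, g x = 0.

Lemma reject_submodule : is_submodule reject.
Proof.
split.
- by move=> g; rewrite linear0.
- by move=> x y hx hy g; rewrite linearD hx hy addr0.
- by move=> r x hx g; rewrite linearZ_LR hx scaler0.
Qed.

Lemma reject_fully_invariant : fully_invariant reject.
Proof.
split; first exact: reject_submodule.
by move=> f x hx g; exact: (hx (g \o f : {linear M -> Q})).
Qed.

Lemma reject_proper (pi : {linear M -> Q}) (x : M) :
  pi x != 0 -> ~ reject x.
Proof. by move=> /eqP pix0 /(_ pi). Qed.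

Lemma reject_eq0_FI_simple (pi : {linear M -> Q}) (x0 : M) :
  FI_simple M -> pi x0 != 0 -> forall x, reject x -> x = 0.
Proof.
move=> hFI pix0; case: (hFI _ reject_fully_invariant) => [h0 | hall] x.
- by move/h0.
- by case: (reject_proper pix0 (hall x0)).
Qed.

Lemma homs_injective_reject_eq0 :
  (forall x, reject x -> x = 0) ->
  injective (fun (x : M) (g : {linear M -> Q}) => g x).
Proof.
move=> hrej x y /= hxy; apply/eqP; rewrite -subr_eq0; apply/eqP/hrej => g.
by rewrite linearB /= (congr1 (fun F => F g) hxy) subrr.
Qed.

End Reject.

Theorem proposition4p16 (R : pzRingType) (M : lmodType R) :
  projective_in_sigma M -> FI_simple M ->
  forall (Q : lmodType R) (pi : {linear M -> Q}),
    (forall q : Q, exists x : M, pi x = q) -> (exists q : Q, q != 0) ->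
    exists (S : Type) (f : S -> {linear M -> Q}),
      injective (fun (x : M) (s : S) => f s x).
Proof.
move=> _ hFI Q pi hsurj [q0 hq0].
have [x0 pix0] := hsurj q0.
have pix0_neq0 : pi x0 != 0 by rewrite pix0.
exists {linear M -> Q}, id.
exact: homs_injective_reject_eq0 (reject_eq0_FI_simple hFI pix0_neq0).
Qed.
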